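(* Let $k\ge 3$ be an integer such that every set of $k-1$ distinct positive integers has the LR property. Let $\{v_1,\ldots,v_k\}$ be a set of $k$ distinct positive integers with $\gcd(v_1,\ldots,v_k)=1$ but $\gcd(v_1,\ldots,v_{k-1})\neq 1$. Then $\{v_1,\ldots,v_k\}$ has the LR property.
   Context: For a real number $x$, $\|x\|$ denotes the distance from $x$ to the nearest integer. A finite set $S$ of $m$ integers has the LR (lonely runner) property if there exists a real $t$ such that $\|tv\|\ge \frac{1}{m+1}$ for all $v\in S$. The hypothesis ''every set of $k-1$ distinct positive integers has the LR property'' is what the paper calls ''the lonely runner conjecture holds for $k-1$''. *)

From Stdlib Require Import Reals ZArith List.
Open Scope R_scope.

Definition dist_int (x : R) : R :=
  Rmin (x - IZR (Int_part x)) (IZR (Int_part x) + 1 - x).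

(* A finite set S of m integers, given as a duplicate-free list of length m,
   has the LR property if some real t gives ||t v|| >= 1/(m+1) for all v in S. *)
Definition LR_property (S : list Z) : Prop :=
  exists t : R, forall v : Z, In v S ->
    dist_int (t * IZR v) >= 1 / (INR (length S) + 1).

(* gcd of a list of integers (gcd of the empty list is 0). *)
Definition gcd_list (l : list Z) : Z := fold_right Z.gcd 0%Z l.

Definition LRC_holds (n : nat) : Prop :=
  forall S : list Z, NoDup S -> length S = n ->
    (forall v, In v S -> (0 < v)%Z) -> LR_property S.

(* Let d >= 2 be the gcd of v_1, ..., v_{k-1}. By hypothesis the k-1 distinct
   positive integers v_i / d have the LR property with some time t0, i.e.
   ||t0 v_i / d|| >= 1/k. Every time t = (t0 + n) / d with n an integer gives
   the same distances on v_1, ..., v_{k-1}, while on v_k, which is coprime to d,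
   the positions t v_k run over all the shifts of t0 v_k / d by multiples of 1/d
   (modulo 1). One of these lies in [1/4, 3/4], and 1/4 >= 1/(k+1) as k >= 3. *)

From Stdlib Require Import Reals ZArith List Lra Lia.
Open Scope R_scope.

Lemma dist_int_shift (x : R) (n : Z) : dist_int (x + IZR n) = dist_int x.
Proof.
  unfold dist_int.
  assert (Hn : Int_part (x + IZR n) = (Int_part x + n)%Z).
  { symmetry; apply Int_part_spec; rewrite plus_IZR.
    destruct (base_Int_part x); lra. }
  rewrite Hn, plus_IZR.
  f_equal; ring.
Qed.

Lemma dist_int_unit (x : R) : 0 <= x < 1 -> dist_int x = Rmin x (1 - x).
Proof.
  intros Hx; unfold dist_int.
  rewrite <- (Int_part_spec x 0) by (simpl; lra).
  f_equal; simpl; ring.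
Qed.

Lemma dist_int_ge_quarter (x : R) : 1/4 <= x <= 3/4 -> dist_int x >= 1/4.
Proof.
  intros Hx; rewrite dist_int_unit by lra.
  apply Rle_ge, Rmin_glb; lra.
Qed.

Lemma exists_int_div_between (x : R) (d : Z) :
  (2 <= d)%Z -> exists m : Z, 1/4 <= x + IZR m / IZR d <= 3/4.
Proof.
  intros Hd; apply IZR_le in Hd.
  exists (up ((1/4 - x) * IZR d)).
  destruct (archimed ((1/4 - x) * IZR d)) as [Hup1 Hup2].
  split; apply Rmult_le_reg_r with (IZR d); try lra;
    field_simplify; nra.
Qed.

Lemma dist_int_div_mul_multiple (t : R) (n d q : Z) :
  d <> 0%Z -> dist_int ((t + IZR n) / IZR d * IZR (q * d)) = dist_int (t * IZR q).
Proof.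
  intros Hd; apply not_0_IZR in Hd.
  rewrite <- (dist_int_shift (t * IZR q) (n * q)).
  f_equal; rewrite !mult_IZR; field; exact Hd.
Qed.

(* Since c is invertible modulo d (c a = 1 - b d), the shift n = a m moves
   (t + n) c / d by m / d modulo 1. *)
Lemma exists_int_dist_int_div_ge_quarter (t : R) (d c : Z) :
  (2 <= d)%Z -> Z.gcd d c = 1%Z ->
  exists n : Z, dist_int ((t + IZR n) / IZR d * IZR c) >= 1/4.
Proof.
  intros Hd Hco.
  destruct (Z.gcd_bezout _ _ _ Hco) as [b [a Hab]].
  destruct (exists_int_div_between (t * IZR c / IZR d) d Hd) as [m Hm].
  exists (a * m)%Z.
  rewrite <- (dist_int_shift _ (m * b)).
  apply dist_int_ge_quarter.
  assert (Hd0 : IZR d <> 0) by (apply not_0_IZR; lia).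
  assert (Hinv : IZR a * IZR c = 1 - IZR b * IZR d).
  { rewrite <- !mult_IZR, <- minus_IZR; f_equal; lia. }
  replace ((t + IZR (a * m)) / IZR d * IZR c + IZR (m * b))
    with (t * IZR c / IZR d + IZR m * (IZR a * IZR c + IZR b * IZR d) / IZR d)
    by (rewrite !mult_IZR; field; exact Hd0).
  rewrite Hinv; replace (1 - IZR b * IZR d + IZR b * IZR d) with 1 by ring.
  rewrite Rmult_1_r; exact Hm.
Qed.

Lemma gcd_list_divide (l : list Z) (v : Z) : In v l -> (gcd_list l | v)%Z.
Proof.
  induction l as [|a l IH]; simpl; [tauto|].
  intros [<-|Hv].
  - apply Z.gcd_divide_l.
  - eapply Z.divide_trans; [apply Z.gcd_divide_r | auto].
Qed.

Lemma gcd_list_pos (l : list Z) :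
  l <> nil -> (forall v, In v l -> (0 < v)%Z) -> (0 < gcd_list l)%Z.
Proof.
  intros Hl Hpos; destruct l as [|v l]; [congruence|].
  assert (Hv : (0 < v)%Z) by (apply Hpos; left; reflexivity).
  assert (Hge : (0 <= gcd_list (v :: l))%Z) by apply Z.gcd_nonneg.
  destruct (gcd_list_divide (v :: l) v (or_introl eq_refl)) as [q Hq].
  destruct (Z.eq_dec (gcd_list (v :: l)) 0) as [H0 | H0]; [rewrite H0 in Hq |]; lia.
Qed.

Lemma gcd_list_app1 (l : list Z) (x : Z) :
  gcd_list (l ++ x :: nil) = Z.gcd (gcd_list l) x.
Proof.
  induction l as [|a l IH]; simpl.
  - apply Z.gcd_0_r.
  - rewrite IH; apply Z.gcd_assoc.
Qed.

Lemma NoDup_map_div_exact (d : Z) (l : list Z) :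
  (0 < d)%Z -> (forall v, In v l -> (d | v)%Z) ->
  NoDup l -> NoDup (map (fun v => v / d)%Z l).
Proof.
  intros Hd Hdiv; apply NoDup_map_NoDup_ForallPairs.
  intros x y Hx Hy Hxy.
  rewrite (Znumtheory.Zdivide_Zdiv_eq d x), (Znumtheory.Zdivide_Zdiv_eq d y) by auto.
  rewrite Hxy; reflexivity.
Qed.

Lemma LR_property_div_common_factor (k : nat) (vs : list Z) (d : Z) :
  LRC_holds k -> length vs = k -> NoDup vs ->
  (forall v, In v vs -> (0 < v)%Z) ->
  (1 < d)%Z -> (forall v, In v vs -> (d | v)%Z) ->
  LR_property (map (fun v => v / d)%Z vs).
Proof.
  intros HLR Hlen Hnd Hpos Hd Hdiv; apply HLR.
  - apply NoDup_map_div_exact; auto; lia.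
  - rewrite length_map; exact Hlen.
  - intros w Hw; apply in_map_iff in Hw as [v [<- Hv]].
    apply Znumtheory.Zdivide_Zdiv_lt_pos; auto.
Qed.

Lemma LR_property_app1_coprime (vs : list Z) (c d : Z) :
  (2 <= length vs)%nat -> (2 <= d)%Z ->
  (forall v, In v vs -> (d | v)%Z) -> Z.gcd d c = 1%Z ->
  LR_property (map (fun v => v / d)%Z vs) ->
  LR_property (vs ++ c :: nil).
Proof.
  intros Hlen Hd Hdiv Hco [t0 Ht0].
  rewrite length_map in Ht0.
  destruct (exists_int_dist_int_div_ge_quarter t0 d c Hd Hco) as [n Hn].
  exists ((t0 + IZR n) / IZR d).
  rewrite length_app, plus_INR; simpl INR.
  apply le_INR in Hlen; simpl in Hlen.
  intros v Hv; apply in_app_or in Hv as [Hv | [<- | []]].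
  - destruct (Hdiv v Hv) as [q ->].
    rewrite dist_int_div_mul_multiple by lia.
    apply Rge_trans with (1 / (INR (length vs) + 1)).
    + apply Ht0, in_map_iff; exists (q * d)%Z; split; auto.
      apply Z.div_mul; lia.
    + apply Rle_ge, Rmult_le_compat_l, Rinv_le_contravar; lra.
  - apply Rge_trans with (1/4); [exact Hn |].
    apply Rle_ge, Rmult_le_compat_l, Rinv_le_contravar; lra.
Qed.

Theorem lemma4 (k : nat) (vs : list Z) (vk : Z) :
  (3 <= k)%nat ->
  LRC_holds (k - 1) ->
  length (vs ++ vk :: nil) = k ->
  NoDup (vs ++ vk :: nil) ->
  (forall v, In v (vs ++ vk :: nil) -> (0 < v)%Z) ->
  gcd_list (vs ++ vk :: nil) = 1%Z ->
  gcd_list vs <> 1%Z ->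
  LR_property (vs ++ vk :: nil).
Proof.
  intros Hk HLR Hlen Hnd Hpos Hg1 Hg.
  rewrite length_app in Hlen; simpl in Hlen.
  rewrite gcd_list_app1 in Hg1.
  assert (Hpos_vs : forall v, In v vs -> (0 < v)%Z)
    by (intros v Hv; apply Hpos, in_or_app; auto).
  assert (Hvs : vs <> nil) by (intros ->; simpl in Hlen; lia).
  pose proof (gcd_list_pos vs Hvs Hpos_vs).
  assert (Hdiv : forall v, In v vs -> (gcd_list vs | v)%Z)
    by (intros; apply gcd_list_divide; auto).
  apply (LR_property_app1_coprime vs vk (gcd_list vs)); [lia | lia | exact Hdiv | exact Hg1 |].
  apply (LR_property_div_common_factor (k - 1)); [exact HLR | lia | | exact Hpos_vs | lia | exact Hdiv].
  exact (NoDup_app_remove_r _ _ Hnd).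
Qed.
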